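(* Let $\mathrm{SU}(2,1)$ denote the group of complex $3\times 3$ matrices of determinant $1$ preserving the Hermitian form $\langle z,w\rangle = z_1\overline{w_3}+z_2\overline{w_2}+z_3\overline{w_1}$ on $\mathbb{C}^3$. Let $\Gamma\subset \mathrm{SU}(2,1)$ be a subgroup, and let $\mathrm{Tr}(\Gamma)=\mathbb{Q}(\mathrm{Tr}(g) : g\in\Gamma)$. Suppose that $\Gamma$ contains a parabolic element and that $\Gamma$ is Zariski dense in $\mathrm{SU}(2,1)$. Then $\Gamma$ can be conjugated (within $\mathrm{SU}(2,1)$) to a subgroup of $\mathrm{SU}(2,1,\mathrm{Tr}(\Gamma))$, i.e. there exists $h\in\mathrm{SU}(2,1)$ such that every entry of every matrix in $h\Gamma h^{-1}$ lies in $\mathrm{Tr}(\Gamma)$.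
   Context: Complex hyperbolic plane $\mathbb{H}^2_{\mathbb{C}}$ is the image in $\mathbb{C}P^2$ of the vectors $z$ with $\langle z,z\rangle<0$, and its boundary $\partial\mathbb{H}^2_{\mathbb{C}}$ is the image of the nonzero vectors with $\langle z,z\rangle=0$; $\mathrm{SU}(2,1)$ acts on $\mathbb{H}^2_{\mathbb{C}}\cup\partial\mathbb{H}^2_{\mathbb{C}}$ projectively. An element of $\mathrm{SU}(2,1)$ is parabolic if its action fixes exactly one point of $\partial\mathbb{H}^2_{\mathbb{C}}$ and no point of $\mathbb{H}^2_{\mathbb{C}}$. For a field $K\subset\mathbb{C}$, $\mathrm{SU}(2,1,K)$ denotes the set of matrices in $\mathrm{SU}(2,1)$ with all entries in $K$. *)

From HB Require Import structures.
From mathcomp Require Import all_boot all_order all_algebra.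
From mathcomp Require Import reals.
From mathcomp Require Import complex.
From mathcomp Require Import mpoly.
Set Implicit Arguments. Unset Strict Implicit. Unset Printing Implicit Defensive.
Import Order.TTheory GRing.Theory Num.Theory.
Local Open Scope ring_scope.

Section SU21.
Variable R : realType.
Local Notation C := R[i].

Definition herm (z w : 'cV[C]_3) : C :=
  z 0 0 * (w 2%:R 0)^* + z 1 0 * (w 1 0)^* + z 2%:R 0 * (w 0 0)^*.

Definition SU21 (A : 'M[C]_3) : Prop :=
  \det A = 1 /\ forall z w : 'cV[C]_3, herm (A *m z) (A *m w) = herm z w.

Definition proj_fixed (A : 'M[C]_3) (z : 'cV[C]_3) : Prop :=
  z != 0 /\ exists lam : C, A *m z = lam *: z.

(* Points of the boundary: nonzero null vectors; points of the complex
   hyperbolic plane: negative vectors. *)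
Definition boundary_vec (z : 'cV[C]_3) : Prop := z != 0 /\ herm z z = 0.
Definition negative_vec (z : 'cV[C]_3) : Prop := herm z z < 0.

(* Parabolic: fixes exactly one point of the boundary and no point of H^2_C. *)
Definition parabolic (A : 'M[C]_3) : Prop :=
  SU21 A /\
  (exists z, boundary_vec z /\ proj_fixed A z /\
     forall w, boundary_vec w -> proj_fixed A w -> exists c : C, w = c *: z) /\
  (forall z, negative_vec z -> ~ proj_fixed A z).

Definition subgroup_SU21 (G : 'M[C]_3 -> Prop) : Prop :=
  (forall g, G g -> SU21 g) /\ G 1%:M /\
  (forall g h, G g -> G h -> G (g *m h)) /\
  (forall g, G g -> G (invmx g)).

Definition subfield (K : C -> Prop) : Prop :=
  K 0 /\ K 1 /\ (forall x y, K x -> K y -> K (x + y)) /\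
  (forall x, K x -> K (- x)) /\ (forall x y, K x -> K y -> K (x * y)) /\
  (forall x, K x -> x != 0 -> K x^-1).

Definition trace_field (G : 'M[C]_3 -> Prop) (x : C) : Prop :=
  forall K, subfield K -> (forall g, G g -> K (\tr g)) -> K x.

(* Real Zariski topology on SU(2,1) (a real algebraic group): polynomial
   functions are complex polynomials in the 9 entries and their 9 complex
   conjugates (equivalently, real polynomials in real/imaginary parts). *)
Definition coords (A : 'M[C]_3) (k : 'I_18) : C :=
  let m := (k %% 9)%N in
  let e := A (inord (m %/ 3)) (inord (m %% 3)) in
  if (k < 9)%N then e else e^*.

Definition zariski_dense_SU21 (G : 'M[C]_3 -> Prop) : Prop :=
  forall p : {mpoly C[18]},
    (forall g, G g -> p.@[coords g] = 0) ->
    forall A, SU21 A -> p.@[coords A] = 0.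

End SU21.

From HB Require Import structures.
From mathcomp Require Import all_boot all_order all_algebra.
From mathcomp Require Import reals complex mpoly.
From mathcomp Require Import ring.
From Stdlib Require Import Classical.
Import Order.TTheory GRing.Theory Num.Theory.
Local Open Scope ring_scope.
Set Implicit Arguments. Unset Strict Implicit. Unset Printing Implicit Defensive.

(* A parabolic [P] in [G] fixes a null vector [u] with an eigenvalue [lam] of modulus one. In a
   null frame adapted to [u], [P] is upper triangular, and [Q = (P - lam)(P - lam^-2)] or
   [Q = P - lam] equals [c u u^* J] for some [c != 0], so [tr (h Q) = c <h u, u>] for all [h]. As
   [lam] is a rational function of [tr P] and its conjugate, it lies in the trace field [k], and
   hence so do all ratios [<h u, u> / <g0 u, u>] for [h] in [G]. Zariski density supplies [g0]
   and further elements of [G] with the required nonvanishing pairings; from [k]-combinations of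
   vectors of the orbit [G u] one then builds a frame [S] with Gram matrix [sig J] whose pairings
   with the orbit are [k]-rational. The entries of [S^-1 g S] are such pairings divided by [sig],
   and a scalar multiple of [S^-1] lies in SU(2,1). *)

Section HermitianForm.
Variable R : realType.
Local Notation C := R[i].
Local Notation ev i := (delta_mx i 0 : 'cV[C]_3).
Implicit Types (z w y u v x : 'cV[C]_3) (a b c s : C).

Definition o0 : 'I_3 := @Ordinal 3 0 isT.
Definition o1 : 'I_3 := @Ordinal 3 1 isT.
Definition o2 : 'I_3 := @Ordinal 3 2 isT.

Lemma ord3P (P : 'I_3 -> Prop) : P o0 -> P o1 -> P o2 -> forall i, P i.
Proof.
move=> H0 H1 H2 [[|[|[|//]]] Hi].
- by have -> : Ordinal Hi = o0 by apply: val_inj.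
- by have -> : Ordinal Hi = o1 by apply: val_inj.
- by have -> : Ordinal Hi = o2 by apply: val_inj.
Qed.

Lemma ord1E (i : 'I_1) : i = 0.
Proof. by apply: val_inj; case: i => [[|]]. Qed.

Lemma sum3 (V : nmodType) (F : 'I_3 -> V) : \sum_(i < 3) F i = F o0 + F o1 + F o2.
Proof.
rewrite !big_ord_recr big_ord0 /= add0r.
by congr (F _ + F _ + F _); apply: val_inj.
Qed.

Lemma prod3 (F : 'I_3 -> C) : \prod_(i < 3) F i = F o0 * F o1 * F o2.
Proof.
rewrite !big_ord_recr big_ord0 /= mul1r.
by congr (F _ * F _ * F _); apply: val_inj.
Qed.

Lemma conjCD a b : (a + b)^* = a^* + b^*. Proof. exact: rmorphD. Qed.
Lemma conjCB a b : (a - b)^* = a^* - b^*. Proof. exact: rmorphB. Qed.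
Lemma conjCN a : (- a)^* = - a^*. Proof. exact: rmorphN. Qed.
Lemma conjCM a b : (a * b)^* = a^* * b^*. Proof. exact: rmorphM. Qed.
Lemma conjCV a : (a^-1)^* = (a^*)^-1. Proof. exact: fmorphV. Qed.
Lemma conjCX a n : (a ^+ n)^* = a^* ^+ n. Proof. exact: rmorphXn. Qed.
Lemma conjC_div a b : (a / b)^* = a^* / b^*. Proof. by rewrite conjCM conjCV. Qed.

Lemma col_eq0 u : (forall i, u i 0 = 0) -> u = 0.
Proof. by move=> H; apply/matrixP => i j; rewrite (ord1E j) H mxE. Qed.

Lemma entry_ev (M : 'M[C]_3) i j : M i j = (M *m ev j) i 0.
Proof. by rewrite -colE mxE. Qed.

Definition ct {m n} (A : 'M[C]_(m,n)) : 'M[C]_(n,m) := (map_mx Num.conj A)^T.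

Lemma ctM m n p (A : 'M[C]_(m,n)) (B : 'M[C]_(n,p)) : ct (A *m B) = ct B *m ct A.
Proof. by rewrite /ct map_mxM trmx_mul. Qed.

Lemma ctE m n (A : 'M[C]_(m,n)) i j : ct A i j = (A j i)^*.
Proof. by rewrite /ct !mxE. Qed.

Lemma tr_ct (A : 'M[C]_3) : \tr (ct A) = (\tr A)^*.
Proof. by rewrite /mxtrace rmorph_sum; apply: eq_bigr => i _; rewrite ctE. Qed.

Definition J : 'M[C]_3 := \matrix_(i, j) (if ((i : nat) + j == 2)%N then 1 else 0).

Lemma JJ : J *m J = 1%:M.
Proof.
by apply/matrixP; apply: ord3P; apply: ord3P; rewrite !mxE sum3 !mxE /=; ring.
Qed.

Lemma hermE z w :
  herm z w = z o0 0 * (w o2 0)^* + z o1 0 * (w o1 0)^* + z o2 0 * (w o0 0)^*.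
Proof.
rewrite /herm.
congr (z _ _ * (w _ _)^* + z _ _ * (w _ _)^* + z _ _ * (w _ _)^*); exact: val_inj.
Qed.

Lemma hermM z w : herm z w = (ct w *m J *m z) 0 0.
Proof. by rewrite hermE !mxE sum3 !mxE !sum3 !mxE /=; ring. Qed.

Lemma herm_sym z w : herm w z = (herm z w)^*.
Proof. by rewrite !hermE !conjCD !conjCM !conjCK; ring. Qed.

Lemma hermDl z1 z2 w : herm (z1 + z2) w = herm z1 w + herm z2 w.
Proof. by rewrite !hermE !mxE; ring. Qed.

Lemma hermZl a z w : herm (a *: z) w = a * herm z w.
Proof. by rewrite !hermE !mxE; ring. Qed.

Lemma hermDr z w1 w2 : herm z (w1 + w2) = herm z w1 + herm z w2.
Proof. by rewrite !hermE !mxE !conjCD; ring. Qed.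

Lemma hermZr a z w : herm z (a *: w) = a^* * herm z w.
Proof. by rewrite !hermE !mxE !conjCM; ring. Qed.

Lemma herm0l w : herm 0 w = 0.
Proof. by rewrite hermE !mxE; ring. Qed.

Lemma herm0r w : herm w 0 = 0.
Proof. by rewrite hermE !mxE conjC0; ring. Qed.

Lemma herm_real z : (herm z z)^* = herm z z.
Proof. by rewrite -herm_sym. Qed.

Definition rev3 (i : 'I_3) : 'I_3 := if i == o0 then o2 else if i == o1 then o1 else o0.

Lemma herm_ev z (l : 'I_3) : herm z (ev l) = z (rev3 l) 0.
Proof. by move: l; apply: ord3P; rewrite hermE !mxE /= ?conjC0 ?conjC1; ring. Qed.

Lemma herm_gram (S : 'M[C]_3) s z w :
  ct S *m J *m S = s *: J -> herm (S *m z) (S *m w) = s * herm z w.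
Proof.
move=> H; rewrite !hermM ctM.
have -> : ct w *m ct S *m J *m (S *m z) = ct w *m (ct S *m J *m S) *m z.
  by rewrite !mulmxA.
by rewrite H -scalemxAr -scalemxAl mxE.
Qed.

Lemma gram_herm (S : 'M[C]_3) s :
  (forall z w, herm (S *m z) (S *m w) = s * herm z w) -> ct S *m J *m S = s *: J.
Proof.
move=> H; apply/matrixP => i j.
have entry (M : 'M[C]_3) : (ct (ev i) *m M *m ev j) 0 0 = M i j.
  have -> : ct (ev i) = delta_mx 0 i.
    apply/matrixP => k l; rewrite ctE !mxE (ord1E k) andbC.
    by case: (l == i); rewrite /= ?conjC1 ?conjC0.
  by rewrite -rowE -colE !mxE.
rewrite -entry.
have -> : ct (ev i) *m (ct S *m J *m S) *m ev j =
  ct (S *m ev i) *m J *m (S *m ev j) by rewrite ctM !mulmxA.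
by rewrite -hermM H hermM entry !mxE.
Qed.

Lemma SU21E (A : 'M[C]_3) : SU21 A <-> \det A = 1 /\ ct A *m J *m A = J.
Proof.
split=> [[d H]|[d H]]; split=> //.
  by have := @gram_herm A 1; rewrite scale1r; apply=> z w; rewrite H mul1r.
by move=> z w; rewrite (herm_gram z w (_ : _ = 1 *: J)) ?mul1r ?scale1r.
Qed.

Lemma gram_inv (S : 'M[C]_3) s : s != 0 ->
  ct S *m J *m S = s *: J -> (s^-1 *: (J *m ct S *m J)) *m S = 1%:M.
Proof.
move=> s0 H; rewrite -scalemxAl.
have -> : J *m ct S *m J *m S = J *m (ct S *m J *m S) by rewrite !mulmxA.
by rewrite H scalemxAr scalerA mulVf // scale1r JJ.
Qed.

Lemma gram_unit (S : 'M[C]_3) s : s != 0 -> ct S *m J *m S = s *: J -> S \in unitmx.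
Proof. by move=> s0 /(gram_inv s0) /mulmx1_unit []. Qed.

Lemma SU21_inv (g : 'M[C]_3) : SU21 g -> invmx g = J *m ct g *m J.
Proof.
case/SU21E => _ H; have gJ : ct g *m J *m g = 1 *: J by rewrite scale1r.
have := gram_inv (oner_neq0 _) gJ; rewrite invr1 scale1r => Hl.
have [_ ug] := mulmx1_unit Hl.
by rewrite -[invmx g]mul1mx -Hl mulmxK.
Qed.

Lemma tr_SU21_inv (g : 'M[C]_3) : SU21 g -> \tr (invmx g) = (\tr g)^*.
Proof. by move=> Hg; rewrite SU21_inv // mxtrace_mulC mulmxA JJ mul1mx tr_ct. Qed.

Lemma coord_gram (S : 'M[C]_3) s y (i : 'I_3) : s != 0 ->
  ct S *m J *m S = s *: J -> (invmx S *m y) i 0 = herm y (S *m ev (rev3 i)) / s.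
Proof.
move=> s0 H.
have Ey : y = S *m (invmx S *m y) by rewrite mulmxA mulmxV ?mul1mx // (gram_unit s0 H).
rewrite {2}Ey (herm_gram _ _ H) herm_ev (mulrC s) mulfK //.
by congr (_ _ _); move: i; apply: ord3P.
Qed.

Definition cols3 (a b c : 'cV[C]_3) : 'M[C]_3 :=
  \matrix_(i, j) nth 0 [:: a i 0; b i 0; c i 0] j.

Lemma cols3_mul p q r z : cols3 p q r *m z = z o0 0 *: p + z o1 0 *: q + z o2 0 *: r.
Proof. by apply/matrixP => i j; rewrite (ord1E j) !mxE sum3 !mxE /=; ring. Qed.

Lemma cols3_e0 p q r : cols3 p q r *m ev o0 = p.
Proof. by rewrite cols3_mul !mxE /= scale1r !scale0r !addr0. Qed.

Lemma cols3_e1 p q r : cols3 p q r *m ev o1 = q.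
Proof. by rewrite cols3_mul !mxE /= scale1r !scale0r add0r addr0. Qed.

Lemma cols3_e2 p q r : cols3 p q r *m ev o2 = r.
Proof. by rewrite cols3_mul !mxE /= scale1r !scale0r !add0r. Qed.

Lemma cols3_gram p q r s :
  herm p p = 0 -> herm q p = 0 -> herm r p = s -> herm q q = s ->
  herm r q = 0 -> herm r r = 0 -> s^* = s ->
  ct (cols3 p q r) *m J *m cols3 p q r = s *: J.
Proof.
move=> pp qp rp qq rq rr ss; apply: gram_herm => z w.
rewrite !cols3_mul !hermDl !hermZl !hermDr !hermZr.
rewrite (herm_sym q p) (herm_sym r p) (herm_sym r q) pp qp rp qq rq rr ss conjC0.
by rewrite !hermE; ring.
Qed.

(* The conjugate of the cross product of [J u] and [J w], hence [herm]-orthogonal to [u] and [w]. *)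
Definition cross u w : 'cV[C]_3 :=
  \matrix_(i, j) nth 0 [:: (u o1 0)^* * (w o0 0)^* - (u o0 0)^* * (w o1 0)^*;
                          (u o0 0)^* * (w o2 0)^* - (u o2 0)^* * (w o0 0)^*;
                          (u o2 0)^* * (w o1 0)^* - (u o1 0)^* * (w o2 0)^*] i.

Lemma cross_orthol u w : herm (cross u w) u = 0.
Proof. by rewrite hermE !mxE /=; ring. Qed.

Lemma cross_orthor u w : herm (cross u w) w = 0.
Proof. by rewrite hermE !mxE /=; ring. Qed.

Lemma herm_cross u w :
  herm (cross u w) (cross u w) = herm w u * herm u w - herm u u * herm w w.
Proof. by rewrite !hermE !mxE /= !conjCB !conjCM !conjCK; ring. Qed.

Definition null_frame u w : 'M[C]_3 := cols3 u (cross u w) w.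

Lemma null_frame_gram u w : herm u u = 0 -> herm w w = 0 -> herm w u = 1 ->
  ct (null_frame u w) *m J *m null_frame u w = 1 *: J.
Proof.
move=> uu ww wu; apply: cols3_gram => //.
- exact: cross_orthol.
- by rewrite herm_cross uu ww (herm_sym w u) wu conjC1; ring.
- by rewrite herm_sym cross_orthor conjC0.
- exact: conjC1.
Qed.

Lemma null_partner u : u != 0 -> herm u u = 0 ->
  exists w, herm w w = 0 /\ herm w u = 1.
Proof.
move=> u0 uu.
set x := J *m u; set r := herm x u.
have rE : r = u o0 0 * (u o0 0)^* + u o1 0 * (u o1 0)^* + u o2 0 * (u o2 0)^*.
  by rewrite /r /x hermE !mxE !sum3 !mxE /=; ring.
have rr : r^* = r by rewrite rE !conjCD !conjCM !conjCK; ring.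
have r0 : r != 0.
{ apply: contra u0 => r0; apply/eqP; apply: col_eq0; apply: ord3P.
  all: move: r0; rewrite rE.
  all: rewrite !paddr_eq0 ?addr_ge0 ?mul_conjC_ge0 // !mul_conjC_eq0.
  all: by case/andP => /andP[/eqP ? /eqP ?] /eqP ?. }
set t := - herm x x / (2 * r).
have tc : t^* = t.
  by rewrite /t conjC_div conjCN conjCM conjC_nat herm_real rr.
have ux : herm u x = r by rewrite herm_sym rr.
exists (r^-1 *: (x + t *: u)); split.
  rewrite !(hermZl, hermZr, hermDl, hermDr) uu ux -/r tc /t.
  by field; apply/andP; split => //; change (r^* != 0); rewrite rr.
by rewrite !(hermZl, hermZr, hermDl, hermDr) uu -/r mulr0 addr0 mulVf.
Qed.

End HermitianForm.

Section SubfieldClosure.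
Variables (R : realType) (K : R[i] -> Prop).
Hypothesis HK : subfield K.
Implicit Types a b : R[i].

Lemma subfield0 : K 0. Proof. by case: HK. Qed.
Lemma subfield1 : K 1. Proof. by case: HK => _ []. Qed.
Lemma subfieldD a b : K a -> K b -> K (a + b). Proof. by case: HK => _ [_ [HD _]]; apply: HD. Qed.
Lemma subfieldN a : K a -> K (- a). Proof. by case: HK => _ [_ [_ [HN _]]]; apply: HN. Qed.
Lemma subfieldM a b : K a -> K b -> K (a * b).
Proof. by case: HK => _ [_ [_ [_ [HM _]]]]; apply: HM. Qed.

Lemma subfieldV a : K a -> K a^-1.
Proof.
have [->|a0] := eqVneq a 0; first by rewrite invr0.
by case: HK => _ [_ [_ [_ [_ HV]]]] /HV; apply.
Qed.

Lemma subfieldB a b : K a -> K b -> K (a - b).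
Proof. by move=> ha hb; apply: subfieldD => //; apply: subfieldN. Qed.

Lemma subfield_div a b : K a -> K b -> K (a / b).
Proof. by move=> ha hb; apply: subfieldM => //; apply: subfieldV. Qed.

Lemma subfield_nat n : K n%:R.
Proof.
elim: n => [|n IH]; first exact: subfield0.
by rewrite mulrSr; apply: subfieldD => //; apply: subfield1.
Qed.

End SubfieldClosure.

Section TraceField.
Variables (R : realType) (G : 'M[R[i]]_3 -> Prop).

Lemma trace_field_subfield : subfield (trace_field G).
Proof.
do 5?split.
- by move=> K HK _; apply: subfield0.
- by move=> K HK _; apply: subfield1.
- by move=> x y hx hy K HK Ht; apply: subfieldD (hx K HK Ht) (hy K HK Ht).
- by move=> x hx K HK Ht; apply: subfieldN (hx K HK Ht).
- by move=> x y hx hy K HK Ht; apply: subfieldM (hx K HK Ht) (hy K HK Ht).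
- by move=> x hx _ K HK Ht; apply: subfieldV (hx K HK Ht).
Qed.

Lemma trace_field_tr g : G g -> trace_field G (\tr g).
Proof. by move=> Gg K _; apply. Qed.

(* The conjugates of [k] form a subfield containing every [tr g = (tr g^-1)^*]. *)
Lemma trace_field_conj a : subgroup_SU21 G -> trace_field G a -> trace_field G a^*.
Proof.
move=> [HSU [_ [_ GV]]] ha; have Hk := trace_field_subfield.
apply: (ha (fun x => trace_field G x^*)) => [|g Gg]; last first.
  by rewrite -(tr_SU21_inv (HSU g Gg)); apply: trace_field_tr; apply: GV.
do 5?split.
- by rewrite conjC0; apply: (subfield0 Hk).
- by rewrite conjC1; apply: (subfield1 Hk).
- by move=> x y hx hy; rewrite conjCD; apply: (subfieldD Hk).
- by move=> x hx; rewrite conjCN; apply: (subfieldN Hk).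
- by move=> x y hx hy; rewrite conjCM; apply: (subfieldM Hk).
- by move=> x hx _; rewrite conjCV; apply: (subfieldV Hk).
Qed.

End TraceField.

Section Density.
Variables (R : realType) (G : 'M[R[i]]_3 -> Prop).
Hypothesis HZ : zariski_dense_SU21 G.
Local Notation C := R[i].
Local Notation ev i := (delta_mx i 0 : 'cV[C]_3).
Local Notation J := (@J R).

Definition coord_index (i j : 'I_3) : 'I_18 := inord (3 * i + j).

Lemma coords_index (A : 'M[C]_3) (i j : 'I_3) : coords A (coord_index i j) = A i j.
Proof.
move: i j; apply: ord3P; apply: ord3P; rewrite /coords /coord_index inordK //=.
all: by congr (A _ _); apply: val_inj; rewrite /= inordK.
Qed.

Lemma zariski_dense_linear (f : 'I_3 -> 'I_3 -> C) :
  (exists A, SU21 A /\ \sum_i \sum_j f i j * A i j != 0) ->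
  exists g, G g /\ \sum_i \sum_j f i j * g i j != 0.
Proof.
move=> [A [HA HA0]].
pose p : {mpoly C[18]} := \sum_(i < 3) \sum_(j < 3) f i j *: 'X_(coord_index i j).
have pE B : p.@[coords B] = \sum_i \sum_j f i j * B i j.
  by rewrite /p !sum3 !mevalD !mevalZ !mevalXU !coords_index.
apply: NNPP => Hn.
have p0 g : G g -> p.@[coords g] = 0.
  move=> Gg; rewrite pE; apply/eqP; apply: contraT => Hne.
  by exfalso; apply: Hn; exists g.
by move: HA0; rewrite -pE (HZ p0 HA) eqxx.
Qed.

Lemma zariski_dense_herm y z :
  (exists A, SU21 A /\ herm (A *m y) z != 0) -> exists g, G g /\ herm (g *m y) z != 0.
Proof.
have hermE' (A : 'M[C]_3) :
    herm (A *m y) z = \sum_i \sum_j ((z (rev3 i) 0)^* * y j 0) * A i j.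
  by rewrite hermE !mxE !sum3 /=; ring.
move=> [A [HA H0]].
have [|g [Gg g0]] := @zariski_dense_linear (fun i j => (z (rev3 i) 0)^* * y j 0).
  by exists A; rewrite -hermE'.
by exists g; rewrite hermE'.
Qed.

Definition lower_unipotent : 'M[C]_3 :=
  \matrix_(i, j) nth 0 (nth [::] [:: [:: 1; 0; 0]; [:: 1; 1; 0]; [:: - 2%:R^-1; -1; 1]] i) j.

Lemma lower_unipotent_SU21 : SU21 lower_unipotent.
Proof.
apply/SU21E; split.
  rewrite det_trig ?prod3 ?mxE /=; first by rewrite !mul1r.
  by apply/is_trig_mxP; apply: ord3P; apply: ord3P => //= _; rewrite mxE.
apply/matrixP; apply: ord3P; apply: ord3P.
all: rewrite !mxE !sum3 !mxE !sum3 !mxE /= ?conjC0 ?conjC1 ?conjCN ?conjCV ?conjC_nat.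
all: by field.
Qed.

(* The witness in SU(2,1) is [lower_unipotent] conjugated by the null frame: it moves [u] off
   every coordinate hyperplane of the frame. *)
Lemma dense_orbit_nonorthogonal u w (j : 'I_3) :
  herm u u = 0 -> herm w w = 0 -> herm w u = 1 ->
  exists g, G g /\ herm (g *m u) (null_frame u w *m ev j) != 0.
Proof.
move=> uu ww wu; apply: zariski_dense_herm.
set T := null_frame u w.
have gT : ct T *m J *m T = 1 *: J := null_frame_gram uu ww wu.
have uT : T \in unitmx := gram_unit (oner_neq0 _) gT.
have hT z1 w1 : herm (T *m z1) (T *m w1) = herm z1 w1 by rewrite (herm_gram _ _ gT) mul1r.
have [dM hM] := lower_unipotent_SU21.
exists (T *m lower_unipotent *m invmx T); split.
  split; first by rewrite !det_mulmx dM mulr1 -det_mulmx mulmxV // det1.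
  by move=> z1 w1; rewrite -!mulmxA hT hM -hT !mulmxA mulmxV // !mul1mx.
have -> : T *m lower_unipotent *m invmx T *m u = T *m (lower_unipotent *m ev o0).
  by rewrite -[in LHS](cols3_e0 u (cross u w) w) mulmxA mulmxKV // mulmxA.
rewrite hT herm_ev.
move: j; apply: ord3P; rewrite /= !mxE !sum3 !mxE /= !mulr0 !addr0 !mulr1 ?oner_eq0 //.
  by rewrite oppr_eq0 invr_eq0 pnatr_eq0.
all: by rewrite ?oner_eq0 ?oppr_eq0.
Qed.

End Density.

Ltac field_nz := field; try (repeat (apply/andP; split); first [ done | assumption |
  match goal with H : is_true (_ != 0) |- _ => exact H end ]).

Definition vec3 (R : realType) (a b c : R[i]) : 'cV[R[i]]_3 :=
  \matrix_(i, j) nth 0 [:: a; b; c] i.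

Lemma det_upper3 (R : realType) (B : 'M[R[i]]_3) :
  B o1 o0 = 0 -> B o2 o0 = 0 -> B o2 o1 = 0 -> \det B = B o0 o0 * B o1 o1 * B o2 o2.
Proof.
move=> h10 h20 h21; rewrite -det_tr det_trig ?prod3 ?mxE //.
by apply/is_trig_mxP; apply: ord3P; apply: ord3P => //= _; rewrite mxE.
Qed.

Lemma unimodular_of_conj_div (R : realType) (x : R[i]) :
  x != 0 -> x^* / x = x^*^-1 -> x * x^* = 1.
Proof.
move=> x0 H; have xc0 : x^* != 0 by rewrite conjC_eq0.
have H1 : x^* ^+ 2 = x.
  transitivity (x^* / x * x * x^*); first by field.
  by rewrite H; field_nz.
have H2 : x ^+ 2 = x^* by have := congr1 Num.conj H1; rewrite conjCX conjCK => <-.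
have H3 : (x * x^*) * (x * x^*) = 1 * (x * x^*).
  transitivity (x ^+ 2 * x^* ^+ 2); first by ring.
  by rewrite H1 H2; ring.
by apply: (mulIf (mulf_neq0 x0 xc0)).
Qed.

Section FixedNullFrame.
Variables (R : realType) (B : 'M[R[i]]_3) (lam : R[i]).
Local Notation C := R[i].
Local Notation ev i := (delta_mx i 0 : 'cV[C]_3).
Local Notation J := (@J R).
Hypotheses (gB : ct B *m J *m B = 1 *: J) (detB : \det B = 1).
Hypothesis Be0 : B *m ev o0 = lam *: ev o0.

Lemma herm_fixed_frame z w : herm (B *m z) (B *m w) = herm z w.
Proof. by rewrite (herm_gram _ _ gB) mul1r. Qed.

Lemma gram_entry i j :
  (B o0 i)^* * B o2 j + (B o1 i)^* * B o1 j + (B o2 i)^* * B o0 j = J i j.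
Proof.
move/matrixP: gB => /(_ i j); rewrite !mxE !sum3 !mxE /= mul1r => <-.
by rewrite !sum3 !mxE /=; ring.
Qed.

Lemma fixed_frame_col0 : [/\ B o0 o0 = lam, B o1 o0 = 0 & B o2 o0 = 0].
Proof. by split; rewrite entry_ev Be0 !mxE /= ?mulr1 ?mulr0. Qed.

Lemma fixed_eigen_neq0 : lam != 0.
Proof.
have [b00 b10 b20] := fixed_frame_col0.
have := gram_entry o0 o2; rewrite !mxE /= b00 b10 b20 conjC0 !mul0r !addr0.
by apply: contraPneq => ->; rewrite conjC0 mul0r => /eqP; rewrite eq_sym oner_eq0.
Qed.

Lemma fixed_frame_22 : B o2 o2 = lam^*^-1.
Proof.
have [b00 b10 b20] := fixed_frame_col0.
have lamc0 : lam^* != 0 by rewrite conjC_eq0 fixed_eigen_neq0.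
apply: (mulfI lamc0); rewrite mulfV //.
by have := gram_entry o0 o2; rewrite !mxE /= b00 b10 b20 conjC0 !mul0r !addr0.
Qed.

Lemma fixed_frame_21 : B o2 o1 = 0.
Proof.
have [b00 b10 b20] := fixed_frame_col0.
have := gram_entry o0 o1; rewrite !mxE /= b00 b10 b20 conjC0 !mul0r !addr0.
by move/eqP; rewrite mulf_eq0 conjC_eq0 (negbTE fixed_eigen_neq0) => /eqP.
Qed.

Lemma fixed_frame_11 : B o1 o1 = lam^* / lam.
Proof.
have [b00 b10 b20] := fixed_frame_col0.
have lam0 := fixed_eigen_neq0; have lamc0 : lam^* != 0 by rewrite conjC_eq0.
move: detB; rewrite det_upper3 ?fixed_frame_21 // b00 fixed_frame_22 => d.
transitivity (lam^* / lam * (lam * B o1 o1 * lam^*^-1)); last by rewrite d mulr1.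
by field; rewrite lam0 lamc0.
Qed.

Hypothesis fixed_null_uniq : forall v mu, v != 0 -> herm v v = 0 -> B *m v = mu *: v ->
  exists c, v = c *: ev o0.

(* Otherwise [B] has a second fixed null line, with eigenvalue [B o2 o2 = lam^*^-1]. *)
Lemma fixed_eigen_unimodular : lam * lam^* = 1.
Proof.
have [b00 b10 b20] := fixed_frame_col0.
have b21 := fixed_frame_21; have b22 := fixed_frame_22; have b11 := fixed_frame_11.
have lam0 := fixed_eigen_neq0; have lamc0 : lam^* != 0 by rewrite conjC_eq0.
apply/eqP/negPn/negP => n1.
have h22 : lam - B o2 o2 != 0.
  rewrite b22; apply: contra n1 => /eqP H.
  by apply/eqP; rewrite [X in X * _](subr0_eq H) mulVf.
have h11 : B o1 o1 - B o2 o2 != 0.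
  by rewrite b11 b22; apply: contra n1 => /eqP /subr0_eq /(unimodular_of_conj_div lam0) ->.
pose bb := - B o1 o2 / (B o1 o1 - B o2 o2).
pose aa := - (B o0 o1 * bb + B o0 o2) / (lam - B o2 o2).
pose v := vec3 aa bb 1.
have Bv : B *m v = B o2 o2 *: v.
  apply/matrixP; apply: ord3P => j; rewrite (ord1E j) !mxE !sum3 !mxE /= ?b00 ?b10 ?b20 ?b21.
  - by rewrite /aa; field; rewrite h22.
  - by rewrite /bb; field; rewrite h11.
  - by ring.
have vv : herm v v = 0.
  have := herm_fixed_frame v v; rewrite Bv hermZl hermZr b22 conjCV conjCK => Hv.
  have : (1 - lam^-1 * lam^*^-1) * herm v v = 0 by rewrite mulrBl mul1r -{1}Hv; ring.
  move/eqP; rewrite mulf_eq0 => /orP [|/eqP //].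
  rewrite subr_eq0 => /eqP H'; exfalso; move/eqP: n1; apply.
  transitivity ((lam^-1 * lam^*^-1)^-1); last by rewrite -H' invr1.
  by rewrite invfM !invrK mulrC.
have v2 : v o2 0 = 1 by rewrite mxE.
have v0 : v != 0 by apply: contraPneq v2 => ->; rewrite mxE => /eqP; rewrite eq_sym oner_eq0.
have [c Hc] := fixed_null_uniq v0 vv Bv.
by move: v2; rewrite Hc !mxE /= mulr0 => /eqP; rewrite eq_sym oner_eq0.
Qed.

Lemma fixed_eigen_conj : lam^* = lam^-1.
Proof. by apply: (mulfI fixed_eigen_neq0); rewrite fixed_eigen_unimodular mulfV ?fixed_eigen_neq0. Qed.

Lemma fixed_frame_diag : B o1 o1 = lam^-1 ^+ 2 /\ B o2 o2 = lam.
Proof.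
have lam0 := fixed_eigen_neq0.
by rewrite fixed_frame_11 fixed_frame_22 fixed_eigen_conj invrK; split=> //; field_nz.
Qed.

Lemma fixed_frame_12 : B o1 o2 = - (B o0 o1)^* * lam^-1.
Proof.
have lam0 := fixed_eigen_neq0; have [b11 b22] := fixed_frame_diag.
have := gram_entry o1 o2; rewrite !mxE /= fixed_frame_21 b11 b22 conjCX conjCV conjC0.
rewrite fixed_eigen_conj invrK mul0r addr0 => e12.
transitivity (((B o0 o1)^* * lam + lam ^+ 2 * B o1 o2 - (B o0 o1)^* * lam) / lam ^+ 2).
  by field_nz.
by rewrite e12; field_nz.
Qed.

(* The (0,2) entry of [(B - lam)(B - lam^-2)], its only entry that may be nonzero. *)
Let kappa := B o0 o1 * B o1 o2 + B o0 o2 * (lam - lam^-1 ^+ 2).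

Lemma fixed_frame_quadratic :
  B *m B - (lam + lam^* ^+ 2) *: B + (lam * lam^* ^+ 2)%:M = kappa *: delta_mx o0 o2.
Proof.
have [b00 b10 b20] := fixed_frame_col0; have b21 := fixed_frame_21.
have [b11 b22] := fixed_frame_diag; have b12 := fixed_frame_12.
have lam0 := fixed_eigen_neq0.
rewrite fixed_eigen_conj /kappa; apply/matrixP; apply: ord3P; apply: ord3P.
all: rewrite !mxE ?sum3 ?mxE /= ?mulr1n ?mulr0n ?b00 ?b10 ?b20 ?b21 ?b22 ?b11 ?b12.
all: by field_nz.
Qed.

Lemma fixed_frame_linear : lam = lam^-1 ^+ 2 -> kappa = 0 ->
  B - lam%:M = B o0 o2 *: delta_mx o0 o2.
Proof.
have [b00 b10 b20] := fixed_frame_col0; have b21 := fixed_frame_21.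
have [b11 b22] := fixed_frame_diag; have lam0 := fixed_eigen_neq0.
move=> lm; rewrite /kappa -lm subrr mulr0 addr0 fixed_frame_12 => k0.
have b01 : B o0 o1 = 0.
  have : B o0 o1 * (B o0 o1)^* = 0.
    transitivity (- lam * (B o0 o1 * (- (B o0 o1)^* * lam^-1))); first by field_nz.
    by rewrite k0 mulr0.
  by move/eqP; rewrite mul_conjC_eq0 => /eqP.
have b12 : B o1 o2 = 0 by rewrite fixed_frame_12 b01 conjC0 oppr0 mul0r.
apply/matrixP; apply: ord3P; apply: ord3P.
all: by rewrite !mxE /= ?mulr1n ?mulr0n ?b00 ?b10 ?b20 ?b21 ?b22 ?b11 ?b12 ?b01 -?lm; ring.
Qed.

Hypothesis fixed_not_negative : forall v mu, herm v v < 0 -> B *m v = mu *: v -> False.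

(* If [kappa = 0] but [lam != lam^-2], an explicit negative vector would be fixed. *)
Lemma fixed_frame_degenerate : kappa = 0 -> lam = lam^-1 ^+ 2.
Proof.
have [b00 b10 b20] := fixed_frame_col0; have b21 := fixed_frame_21.
have [b11 b22] := fixed_frame_diag; have b12 := fixed_frame_12.
have lam0 := fixed_eigen_neq0.
move=> k0; apply/eqP; rewrite -subr_eq0; apply/negPn/negP => lm.
move: k0; rewrite /kappa b12 => k0; set m := lam^-1 ^+ 2 in lm k0 *.
have b02 : B o0 o2 = B o0 o1 * (B o0 o1)^* / lam / (lam - m).
  transitivity ((B o0 o1 * (- (B o0 o1)^* * lam^-1) + B o0 o2 * (lam - m)
     - B o0 o1 * (- (B o0 o1)^* * lam^-1)) / (lam - m)); first by field_nz.
  by rewrite k0; field_nz.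
pose bb := B o1 o2 / (lam - m).
have herm_v b : herm (vec3 (- (1 + b * b^*) / 2%:R) b 1)
    (vec3 (- (1 + b * b^*) / 2%:R) b 1) = -1.
  rewrite hermE !mxE /= conjC1 !conjC_div !conjCN !conjCD !conjCM conjCK conjC1 ?conjC_nat.
  by field.
pose aa := - (1 + bb * bb^*) / 2%:R.
apply: (fixed_not_negative (v := vec3 aa bb 1) (mu := lam)).
  by rewrite /aa herm_v oppr_lt0 ltr01.
apply/matrixP; apply: ord3P => j; rewrite (ord1E j) !mxE !sum3 !mxE /= ?b00 ?b10 ?b20 ?b21 ?b22 ?b11 -?/m.
- by rewrite /bb b02 b12; field_nz.
- by rewrite /bb b12; field_nz.
- by ring.
Qed.

Lemma fixed_frame_rank_one : exists2 c, c != 0 &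
  B *m B - (lam + lam^* ^+ 2) *: B + (lam * lam^* ^+ 2)%:M = c *: delta_mx o0 o2
  \/ B - lam%:M = c *: delta_mx o0 o2.
Proof.
have [k0|k0] := eqVneq kappa 0; last by exists kappa => //; left; apply: fixed_frame_quadratic.
have lm := fixed_frame_degenerate k0; have BL := fixed_frame_linear lm k0.
exists (B o0 o2); last by right.
apply/eqP => b02; move: BL; rewrite b02 scale0r => /subr0_eq BL.
have e2e2 : herm (ev o2) (ev o2) = 0 by rewrite herm_ev !mxE.
have e2_neq0 : ev o2 != 0 by apply/eqP => /matrixP /(_ o2 0); rewrite !mxE => /eqP; rewrite oner_eq0.
have Be2 : B *m ev o2 = lam *: ev o2 by rewrite BL mul_scalar_mx.
have [c /matrixP /(_ o2 0)] := fixed_null_uniq e2_neq0 e2e2 Be2.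
by rewrite !mxE /= mulr0 => /eqP; rewrite oner_eq0.
Qed.

End FixedNullFrame.

Section ParabolicRankOne.
Variable R : realType.
Local Notation C := R[i].
Local Notation ev i := (delta_mx i 0 : 'cV[C]_3).
Local Notation J := (@J R).

Lemma tr_frame_rank_one (T Q : 'M[C]_3) u c :
  ct T *m J *m T = 1 *: J -> T *m ev o0 = u -> invmx T *m Q *m T = c *: delta_mx o0 o2 ->
  forall h, \tr (h *m Q) = c * herm (h *m u) u.
Proof.
move=> gT Te0 HQ h; have uT := gram_unit (oner_neq0 _) gT.
have -> : Q = T *m (c *: delta_mx o0 o2) *m invmx T by rewrite -HQ !mulmxA mulmxV // mul1mx mulmxK.
have trE (M : 'M[C]_3) : \tr (M *m (c *: delta_mx o0 o2)) = c * M o2 o0.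
  by rewrite /mxtrace sum3 !mxE !sum3 !mxE /=; ring.
rewrite mulmxA mxtrace_mulC mulmxA mulmxA trE.
rewrite entry_ev -!mulmxA Te0 (@coord_gram _ T 1 _ o2 (oner_neq0 _) gT) divr1.
by rewrite /= Te0.
Qed.

Lemma conjmx_linear (T P : 'M[C]_3) b : T \in unitmx ->
  invmx T *m (P - b%:M) *m T = invmx T *m P *m T - b%:M.
Proof. by move=> uT; rewrite mulmxBr mulmxBl mul_mx_scalar -scalemxAl mulVmx // scalemx1. Qed.

Lemma conjmx_quadratic (T P : 'M[C]_3) a b : T \in unitmx ->
  invmx T *m (P *m P - a *: P + b%:M) *m T =
  (invmx T *m P *m T) *m (invmx T *m P *m T) - a *: (invmx T *m P *m T) + b%:M.
Proof.
move=> uT; rewrite mulmxDr mulmxDl mul_mx_scalar -scalemxAl mulVmx // scalemx1.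
by rewrite mulmxBr mulmxBl -scalemxAr -scalemxAl !mulmxA mulmxK.
Qed.

Lemma parabolic_fixed_frame (P : 'M[C]_3) u lam w :
  SU21 P -> herm u u = 0 -> P *m u = lam *: u ->
  (forall v, boundary_vec v -> proj_fixed P v -> exists c : C, v = c *: u) ->
  (forall z, negative_vec z -> ~ proj_fixed P z) ->
  herm w w = 0 -> herm w u = 1 ->
  let T := null_frame u w in let B := invmx T *m P *m T in
  [/\ ct B *m J *m B = 1 *: J, \det B = 1, B *m ev o0 = lam *: ev o0,
      forall v mu, v != 0 -> herm v v = 0 -> B *m v = mu *: v -> exists c, v = c *: ev o0
    & forall v mu, herm v v < 0 -> B *m v = mu *: v -> False].
Proof.
move=> [detP HPh] uu Pu Huniq Hneg ww wu T B.
have gT : ct T *m J *m T = 1 *: J := null_frame_gram uu ww wu.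
have uT : T \in unitmx := gram_unit (oner_neq0 _) gT.
have hT z1 w1 : herm (T *m z1) (T *m w1) = herm z1 w1 by rewrite (herm_gram _ _ gT) mul1r.
have Te0 : T *m ev o0 = u by rewrite cols3_e0.
have TB (v : 'cV[C]_3) : T *m (B *m v) = P *m (T *m v) by rewrite !mulmxA mulmxV // mul1mx.
have Tv0 (v : 'cV[C]_3) : v != 0 -> T *m v != 0.
  by apply: contra => /eqP /(congr1 (mulmx (invmx T))); rewrite mulKmx // mulmx0 => ->.
split.
- by apply: gram_herm => z1 w1; rewrite -hT !TB HPh hT mul1r.
- by rewrite !det_mulmx detP mulr1 -det_mulmx mulVmx // det1.
- by rewrite -mulmxA Te0 -mulmxA Pu -scalemxAr -Te0 mulKmx.
- move=> v mu v0 vv Bv; have Tv := Tv0 v v0.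
  have [|c Hc] := Huniq (T *m v) (conj Tv (etrans (hT v v) vv)).
    by split=> //; exists mu; rewrite -TB Bv scalemxAr.
  by exists c; rewrite -[v](mulKmx uT) Hc -scalemxAr -Te0 mulKmx.
- move=> v mu vv Bv; have v0 : v != 0 by apply: contraTneq vv => ->; rewrite herm0l ltxx.
  apply: (Hneg (T *m v)); first by rewrite /negative_vec hT.
  by split; [exact: Tv0 | exists mu; rewrite -TB Bv scalemxAr].
Qed.

Lemma parabolic_rank_one (P : 'M[C]_3) : parabolic P ->
  exists u lam, [/\ u != 0, herm u u = 0, lam * lam^* = 1,
    \tr P = 2%:R * lam + lam^* ^+ 2 &
    exists2 c, c != 0 &
      (forall h, \tr (h *m (P *m P - (lam + lam^* ^+ 2) *: P + (lam * lam^* ^+ 2)%:M))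
         = c * herm (h *m u) u)
      \/ forall h, \tr (h *m (P - lam%:M)) = c * herm (h *m u) u].
Proof.
move=> [HP [[u [[u0 uu] [[_ [lam Pu]] Huniq]]] Hneg]]; exists u, lam.
have [w [ww wu]] := null_partner u0 uu.
have [gB detB Be0 uniqB negB] := parabolic_fixed_frame HP uu Pu Huniq Hneg ww wu.
have gT := null_frame_gram uu ww wu; have uT := gram_unit (oner_neq0 _) gT.
have Te0 : null_frame u w *m ev o0 = u by rewrite cols3_e0.
have [b11 b22] := fixed_frame_diag gB detB Be0 uniqB.
have [b00 _ _] := fixed_frame_col0 Be0.
split=> //; first exact: fixed_eigen_unimodular gB detB Be0 uniqB.
  have -> : \tr P = \tr (invmx (null_frame u w) *m P *m null_frame u w).
    by rewrite mxtrace_mulC mulmxA mulmxV // mul1mx.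
  by rewrite /mxtrace sum3 b00 b11 b22 (fixed_eigen_conj gB detB Be0 uniqB); ring.
have [c c0 HQ] := fixed_frame_rank_one gB detB Be0 uniqB negB.
exists c => //; case: HQ => HQ; [left | right]; apply: (tr_frame_rank_one gT Te0).
  by rewrite conjmx_quadratic.
by rewrite conjmx_linear.
Qed.

End ParabolicRankOne.

(* With [t = 2 lam + lam^-2], [lam] is [t / 3] or [(t t^* - 9) / (2 (t^2 - 3 t^* ))]. *)
Lemma parabolic_eigen_in_subfield (R : realType) (K : R[i] -> Prop) (lam : R[i]) :
  subfield K -> (forall x, K x -> K x^*) -> lam * lam^* = 1 ->
  K (2%:R * lam + lam^* ^+ 2) -> K lam.
Proof.
move=> HK Kc n1.
have lam0 : lam != 0 by apply: contraPneq n1 => ->; rewrite mul0r => /eqP; rewrite eq_sym oner_eq0.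
have lamc : lam^* = lam^-1 by apply: (mulfI lam0); rewrite n1 mulfV.
rewrite lamc; set t := 2%:R * lam + lam^-1 ^+ 2 => Kt.
have Ktc := Kc _ Kt.
have tc : t^* = 2%:R * lam^-1 + lam ^+ 2.
  by rewrite /t conjCD conjCM conjC_nat conjCX conjCV lamc invrK.
have [lm|lm] := eqVneq (lam - lam^-1 ^+ 2) 0.
  have -> : lam = t / 3%:R.
    rewrite /t; have -> : lam^-1 ^+ 2 = lam by apply/eqP; rewrite eq_sym -subr_eq0 lm.
    by field.
  exact: (subfield_div HK Kt (subfield_nat HK 3)).
have Dz : t ^+ 2 - 3%:R * t^* = (lam - lam^-1 ^+ 2) ^+ 2 by rewrite tc /t; field_nz.
have D0 : (lam - lam^-1 ^+ 2) ^+ 2 != 0 by rewrite expf_neq0.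
have l3 : lam * (lam * lam) - 1 != 0.
  have -> : lam * (lam * lam) - 1 = lam ^+ 2 * (lam - lam^-1 ^+ 2) by field_nz.
  by rewrite mulf_neq0 // expf_neq0.
have -> : lam = (t * t^* - 9%:R) / (2%:R * (t ^+ 2 - 3%:R * t^*)).
  by rewrite Dz tc /t; field_nz.
apply: (subfield_div HK (subfieldB HK (subfieldM HK Kt Ktc) (subfield_nat HK 9))).
apply: (subfieldM HK (subfield_nat HK 2)).
by rewrite expr2; apply: (subfieldB HK (subfieldM HK Kt Kt) (subfieldM HK (subfield_nat HK 3) Ktc)).
Qed.

Lemma tr_poly_in_trace_field (R : realType) (G : 'M[R[i]]_3 -> Prop) (P h : 'M[R[i]]_3) a b :
  subgroup_SU21 G -> G P -> G h -> trace_field G a -> trace_field G b ->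
  trace_field G (\tr (h *m (P *m P - a *: P + b%:M))) /\
  trace_field G (\tr (h *m (P - b%:M))).
Proof.
move=> [_ [_ [GM _]]] GP Gh ka kb; have Hk := trace_field_subfield G.
have mxtraceB (X Y : 'M[R[i]]_3) : \tr (X - Y) = \tr X - \tr Y by exact: raddfB.
split.
  rewrite mulmxDr mulmxBr mxtraceD mxtraceB -scalemxAr mxtraceZ mul_mx_scalar mxtraceZ mulmxA.
  apply: (subfieldD Hk (subfieldB Hk _ _) (subfieldM Hk kb (trace_field_tr Gh))).
    exact: (trace_field_tr (GM _ _ (GM _ _ Gh GP) GP)).
  exact: (subfieldM Hk ka (trace_field_tr (GM _ _ Gh GP))).
rewrite mulmxBr mxtraceB mul_mx_scalar mxtraceZ.
exact: (subfieldB Hk (trace_field_tr (GM _ _ Gh GP)) (subfieldM Hk kb (trace_field_tr Gh))).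
Qed.

Lemma parabolic_orbit_rational (R : realType) (G : 'M[R[i]]_3 -> Prop) (P : 'M[R[i]]_3) :
  subgroup_SU21 G -> G P -> parabolic P ->
  exists u c, [/\ u != 0, herm u u = 0, c != 0 &
    forall h, G h -> trace_field G (c * herm (h *m u) u)].
Proof.
move=> HG GP HP; have Hk := trace_field_subfield G.
have [u [lam [u0 uu n1 trP [c c0 HQ]]]] := parabolic_rank_one HP.
have klam : trace_field G lam.
  apply: (parabolic_eigen_in_subfield Hk (fun x => trace_field_conj HG) n1).
  by rewrite -trP; apply: trace_field_tr.
have kl : trace_field G (lam^* ^+ 2).
  by rewrite expr2; apply: (subfieldM Hk); apply: trace_field_conj.
exists u, c; split=> // h Gh; case: HQ => HQ; rewrite -HQ.
  by case: (tr_poly_in_trace_field HG GP Gh (subfieldD Hk klam kl) (subfieldM Hk klam kl)).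
by case: (tr_poly_in_trace_field HG GP Gh (subfield0 Hk) klam).
Qed.

Section RationalFrame.
Variables (R : realType) (G : 'M[R[i]]_3 -> Prop).
Local Notation C := R[i].
Local Notation ev i := (delta_mx i 0 : 'cV[C]_3).
Local Notation J := (@J R).
Local Notation k := (trace_field G).
Hypothesis HG : subgroup_SU21 G.
Variables (u : 'cV[C]_3) (g0 : 'M[C]_3).
Hypotheses (uu : herm u u = 0) (Gg0 : G g0).
Let q := herm (g0 *m u) u.
Hypothesis q0 : q != 0.
Hypothesis herm_orbit_rational : forall h, G h -> k (herm (h *m u) u / q).

Let Hk := trace_field_subfield G.

(* [rat_left y] and [rat_right z] say that [y] (resp. [z]) pairs [k]-rationally, after
   normalisation by [q], with the orbit [G u] when placed in the left (resp. right)
   argument of [herm]; both hold for the [k]-span of [G u]. *)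
Definition rat_left y := forall g g', G g -> G g' -> k (herm (g *m y) (g' *m u) / q).
Definition rat_right z := forall y, rat_left y -> forall g, G g -> k (herm (g *m y) z / q).

Lemma rat_left_u : rat_left u.
Proof.
move=> g g' Gg Gg'; have [HSU [_ [GM GV]]] := HG.
have [dg' Hg'] := HSU g' Gg'.
have ug' : g' \in unitmx by rewrite unitmxE dg' unitr1.
have -> : herm (g *m u) (g' *m u) = herm ((invmx g' *m g) *m u) u.
  by rewrite -(Hg' (invmx g' *m g *m u) u) !mulmxA mulmxV ?mul1mx.
exact: (herm_orbit_rational (GM _ _ (GV _ Gg') Gg)).
Qed.

Lemma rat_left0 : rat_left 0.
Proof. by move=> g g' _ _; rewrite mulmx0 herm0l mul0r; apply: (subfield0 Hk). Qed.

Lemma rat_left_orbit y h : rat_left y -> G h -> rat_left (h *m y).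
Proof.
have [_ [_ [GM _]]] := HG.
by move=> Vy Gh g g' Gg Gg'; rewrite mulmxA; apply: Vy => //; apply: GM.
Qed.

Lemma rat_left_lin y y' a : rat_left y -> rat_left y' -> k a -> rat_left (a *: y + y').
Proof.
move=> Vy Vy' ka g g' Gg Gg'.
rewrite mulmxDr -scalemxAr hermDl hermZl mulrDl -mulrA.
exact: (subfieldD Hk (subfieldM Hk ka (Vy g g' Gg Gg')) (Vy' g g' Gg Gg')).
Qed.

Lemma rat_right_orbit h : G h -> rat_right (h *m u).
Proof. by move=> Gh y Vy g Gg; apply: Vy. Qed.

Lemma rat_right0 : rat_right 0.
Proof. by move=> y _ g _; rewrite herm0r mul0r; apply: (subfield0 Hk). Qed.

Lemma rat_right_u : rat_right u.
Proof. by rewrite -[u]mul1mx; apply: rat_right_orbit; case: HG => _ []. Qed.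

Lemma rat_right_lin z z' a : rat_right z -> rat_right z' -> k a -> rat_right (a *: z + z').
Proof.
move=> Vz Vz' ka y Vy g Gg.
rewrite hermDr hermZr mulrDl -mulrA.
exact: (subfieldD Hk (subfieldM Hk (trace_field_conj HG ka) (Vz y Vy g Gg)) (Vz' y Vy g Gg)).
Qed.

Lemma rat_pair y z : rat_left y -> rat_right z -> k (herm y z / q).
Proof. by move=> Vy Vz; rewrite -[y]mul1mx; apply: Vz => //; case: HG => _ []. Qed.

Lemma rational_null_partner :
  exists w, [/\ rat_left w, rat_right w, herm w u = q & herm w w = 0].
Proof.
set x := g0 *m u.
have Vx : rat_left x := rat_left_orbit rat_left_u Gg0.
have V2x : rat_right x := rat_right_orbit Gg0.
have ux : herm u x = q^* by rewrite herm_sym.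
have hxxr := herm_real x.
have qc0 : q^* != 0 by rewrite conjC_eq0.
set t := - herm x x / (2%:R * q^*).
have kt : k t.
  have -> : t = - (herm x x / q)^* / 2%:R by rewrite /t conjC_div hxxr; field_nz.
  exact: (subfield_div Hk (subfieldN Hk (trace_field_conj HG (rat_pair Vx V2x)))
            (subfield_nat Hk 2)).
exists (t *: u + x); split.
- exact: rat_left_lin rat_left_u Vx kt.
- exact: rat_right_lin rat_right_u V2x kt.
- by rewrite hermDl hermZl uu mulr0 add0r.
rewrite !(hermDl, hermDr, hermZl, hermZr) uu ux /t conjC_div conjCN conjCM hxxr conjCK.
by rewrite conjC_nat -/q; field_nz.
Qed.

Hypothesis HZ : zariski_dense_SU21 G.

(* [v] is [g1 u] projected orthogonally to the hyperbolic plane of [u] and [w], hence positive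
   once nonzero; [g1] is chosen by density so that [v] has a component along the third frame vector. *)
Lemma rational_positive_vector w : rat_left w -> rat_right w ->
  herm w u = q -> herm w w = 0 ->
  exists v, [/\ rat_left v, rat_right v, herm v u = 0, herm v w = 0 & 0 < herm v v].
Proof.
move=> Vw V2w wu ww.
have uw : herm u w = q^* by rewrite herm_sym wu.
pose wn := q^-1 *: w.
have wnu : herm wn u = 1 by rewrite hermZl wu mulVf.
have wnn : herm wn wn = 0 by rewrite hermZl hermZr ww !mulr0.
have [g1 [Gg1]] := dense_orbit_nonorthogonal HZ o1 uu wnn wnu.
rewrite /null_frame cols3_e1; set z := cross u wn; set y := g1 *m u => yz.
have uz : herm u z = 0 by rewrite herm_sym cross_orthol conjC0.
have wz : herm w z = 0.
  have : herm wn z = 0 by rewrite herm_sym cross_orthor conjC0.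
  by rewrite hermZl => /eqP; rewrite mulf_eq0 invr_eq0 (negbTE q0) /= => /eqP.
have Vy : rat_left y := rat_left_orbit rat_left_u Gg1.
have V2y : rat_right y := rat_right_orbit Gg1.
have qc0 : q^* != 0 by rewrite conjC_eq0.
pose b := - herm y u / q; pose a := - herm y w / q^*.
have kb : k b by rewrite /b mulNr; exact: (subfieldN Hk (rat_pair Vy rat_right_u)).
have ka : k a.
  have -> : a = - (herm w y / q)^* by rewrite /a conjC_div -herm_sym mulNr.
  exact: (subfieldN Hk (trace_field_conj HG (rat_pair Vw V2y))).
pose v := a *: u + (b *: w + y).
have vu : herm v u = 0 by rewrite !(hermDl, hermZl) uu wu /b; field_nz.
have vw : herm v w = 0 by rewrite !(hermDl, hermZl) uw ww /a; field_nz.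
have vz : herm v z != 0 by rewrite !(hermDl, hermZl) uz wz !mulr0 !add0r.
exists v; split => //.
- exact: rat_left_lin rat_left_u (rat_left_lin Vw Vy kb) ka.
- exact: rat_right_lin rat_right_u (rat_right_lin V2w V2y kb) ka.
have gT : ct (null_frame u wn) *m J *m null_frame u wn = 1 *: J := null_frame_gram uu wnn wnu.
have uT := gram_unit (oner_neq0 _) gT.
pose c := invmx (null_frame u wn) *m v.
have vE : v = null_frame u wn *m c by rewrite /c mulKVmx.
have c0 : c o0 0 = 0.
  by rewrite /c (coord_gram v o0 (oner_neq0 _) gT) /= cols3_e2 hermZr vw mulr0 mul0r.
have c1 : c o1 0 = herm v z by rewrite /c (coord_gram v o1 (oner_neq0 _) gT) /= cols3_e1 divr1.
have c2 : c o2 0 = 0 by rewrite /c (coord_gram v o2 (oner_neq0 _) gT) /= cols3_e0 vu mul0r.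
have -> : herm v v = c o1 0 * (c o1 0)^*.
  by rewrite {1 2}vE (herm_gram _ _ gT) mul1r hermE c0 c2 conjC0; ring.
by rewrite mul_conjC_gt0 c1.
Qed.

Lemma rational_frame : exists S sig,
  [/\ ct S *m J *m S = sig *: J, 0 < sig, k (sig / q) &
      forall j, rat_left (S *m ev j) /\ rat_right (S *m ev j)].
Proof.
have [w [Vw V2w wu ww]] := rational_null_partner.
have [v [Vv V2v vu vw v_gt0]] := rational_positive_vector Vw V2w wu ww.
set sig := herm v v in v_gt0 *; have ks : k (sig / q) := rat_pair Vv V2v.
have sig0 : sig != 0 by rewrite gt_eqF.
pose w' := (sig / q) *: w.
exists (cols3 u v w'), sig; split => //.
  apply: cols3_gram => //.
  - by rewrite /w' hermZl wu; field_nz.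
  - by rewrite /w' hermZl herm_sym vw conjC0 mulr0.
  - by rewrite /w' hermZl hermZr ww !mulr0.
  - by rewrite herm_real.
apply: ord3P; rewrite ?cols3_e0 ?cols3_e1 ?cols3_e2; split => //.
- exact: rat_left_u.
- exact: rat_right_u.
- by rewrite -[w']addr0; apply: rat_left_lin => //; apply: rat_left0.
- by rewrite -[w']addr0; apply: rat_right_lin => //; apply: rat_right0.
Qed.

Lemma rational_conjugate S sig : ct S *m J *m S = sig *: J -> sig != 0 -> k (sig / q) ->
  (forall j, rat_left (S *m ev j) /\ rat_right (S *m ev j)) ->
  forall g, G g -> forall i j, k ((invmx S *m g *m S) i j).
Proof.
move=> gS sig0 ks HS g Gg i j.
rewrite entry_ev -!mulmxA (coord_gram _ i sig0 gS).
have [Vj _] := HS j; have [_ V2i] := HS (rev3 i).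
have q_sig : herm (g *m (S *m ev j)) (S *m ev (rev3 i)) / sig =
  (herm (g *m (S *m ev j)) (S *m ev (rev3 i)) / q) / (sig / q) by field_nz.
rewrite q_sig; exact: (subfield_div Hk (V2i _ Vj _ Gg) ks).
Qed.

End RationalFrame.

(* [|det S|^2 = sig^3], so a cube root [s] of [det S] has [|s|^2 = sig] and rescales [S^-1] into SU(2,1). *)
Lemma SU21_rescale (R : realType) (S : 'M[R[i]]_3) sig :
  ct S *m J R *m S = sig *: J R -> 0 < sig ->
  exists2 s, s != 0 & SU21 (s *: invmx S).
Proof.
move=> gS sig_gt0; have sig0 : sig != 0 by rewrite gt_eqF.
have uS : S \in unitmx := gram_unit sig0 gS.
set d := \det S.
have d0 : d != 0 by rewrite -unitfE -unitmxE.
have detJ0 : \det (J R) != 0.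
  apply: contraPneq (congr1 determinant (JJ R)) => dJ.
  by rewrite det_mulmx dJ mul0r det1 => /eqP; rewrite eq_sym oner_eq0.
have dd : d * d^* = sig ^+ 3.
  have := congr1 determinant gS; rewrite !det_mulmx detZ /ct det_tr det_map_mx -/d => /eqP.
  rewrite -subr_eq0.
  have -> : d^* * \det (J R) * d - sig ^+ 3 * \det (J R) = (d * d^* - sig ^+ 3) * \det (J R).
    by ring.
  by rewrite mulf_eq0 (negbTE detJ0) orbF subr_eq0 => /eqP.
pose s := 3.-root d.
have s3 : s ^+ 3 = d by rewrite rootCK.
have s0 : s != 0 by apply: contra d0 => /eqP s0; rewrite -s3 s0 expr0n.
have ss : s * s^* = sig.
  apply/eqP; rewrite -(@eqrXn2 _ 3) ?mul_conjC_ge0 ?ltW //.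
  by rewrite exprMn -conjCX s3 dd.
exists s => //; split; first by rewrite detZ det_inv -/d s3 mulfV.
move=> z w; rewrite -!scalemxAl hermZl hermZr mulrA ss.
rewrite -{2}[z](mulKVmx uS) -{2}[w](mulKVmx uS) (herm_gram _ _ gS).
by field_nz.
Qed.

Lemma conjmx_scale_inv (R : realType) (S g : 'M[R[i]]_3) s : S \in unitmx -> s != 0 ->
  s *: invmx S *m g *m invmx (s *: invmx S) = invmx S *m g *m S.
Proof.
move=> uS s0; have uh : s *: invmx S \in unitmx by rewrite unitmxZ ?unitmx_inv ?unitfE.
by rewrite invmxZ // invmxK -!scalemxAl -scalemxAr scalerA mulfV // scale1r.
Qed.

Unset Implicit Arguments.

Theorem mainTheorem1 (R : realType) (G : 'M[R[i]]_3 -> Prop) :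
  subgroup_SU21 G ->
  (exists g, G g /\ parabolic g) ->
  zariski_dense_SU21 G ->
  exists h : 'M[R[i]]_3, SU21 h /\
    forall g, G g -> forall i j : 'I_3,
      trace_field G ((h *m g *m invmx h) i j).
Proof.
move=> HG [P [GP HP]] HZ; have Hk := trace_field_subfield G.
have [u [c [u0 uu c0 kc]]] := parabolic_orbit_rational HG GP HP.
have [w [ww wu]] := null_partner u0 uu.
have [g0 [Gg0]] := dense_orbit_nonorthogonal HZ o0 uu ww wu; rewrite cols3_e0 => q0.
have Hq h : G h -> trace_field G (herm (h *m u) u / herm (g0 *m u) u).
  move=> Gh; have -> : herm (h *m u) u / herm (g0 *m u) u =
    (c * herm (h *m u) u) / (c * herm (g0 *m u) u) by field_nz.
  exact: (subfield_div Hk (kc h Gh) (kc g0 Gg0)).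
have [S [sig [gS sig_gt0 ks HS]]] := rational_frame HG uu Gg0 q0 Hq HZ.
have [s s0 hS] := SU21_rescale gS sig_gt0.
exists (s *: invmx S); split => // g Gg i j.
rewrite conjmx_scale_inv ?(gram_unit (lt0r_neq0 sig_gt0) gS) //.
exact: (rational_conjugate q0 gS (lt0r_neq0 sig_gt0) ks HS Gg).
Qed.
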